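(* Let $\mathcal{M}$ be a $W^*$-algebra, $E\subset\mathcal{L}(\mathcal{M})$ a semilattice of projections, and define $\mathcal{S}:=\bigcup_{p\in E}Z(p\mathcal{M}p)\cap\mathcal{U}(\mathcal{M})$, where $Z(p\mathcal{M}p)$ is the center of $p\mathcal{M}p$. If $\mathcal{S}\subset\mathcal{U}(E)$, then $\mathcal{S}$ is an inverse semigroup (under multiplication in $\mathcal{M}$), and moreover $\mathcal{S}$ is a Clifford inverse semigroup.
   Context: $\mathcal{L}(\mathcal{M})$ is the set of orthogonal projections of $\mathcal{M}$, $\mathcal{U}(\mathcal{M})$ the set of partial isometries. A semilattice of projections is a subset $E\subset\mathcal{L}(\mathcal{M})$ of pairwise commuting projections closed under multiplication. $\mathcal{U}(E):=\{u\in\mathcal{U}(\mathcal{M}): u^*u\in E,\ uu^*\in E\}$. An inverse semigroup is a semigroup in which each $s$ has a unique $t$ with $sts=s$, $tst=t$; it is Clifford if its idempotents are central (commute with all its elements). *)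

From HB Require Import structures.
From mathcomp Require Import all_boot all_order all_algebra.
From mathcomp Require Import complex.
From mathcomp Require Import all_classical all_reals all_analysis.
Set Implicit Arguments. Unset Strict Implicit. Unset Printing Implicit Defensive.
Import Order.TTheory GRing.Theory Num.Theory ComplexField.
Import numFieldNormedType.Exports numFieldTopology.Exports.
Local Open Scope ring_scope.
Local Open Scope classical_set_scope.

(* A W*-algebra is a C*-algebra (complete normed complex *-algebra    *)
(* with unit, submultiplicative norm and the C*-identity) which, as a  *)
(* Banach space, is (isometrically, linearly) the dual of some normed  *)
(* space X (its predual).                                              *)

Record WstarAlgebra (R : realType) := {
  wcar :> completeNormedModType R[i];
  wmul : wcar -> wcar -> wcar;
  wone : wcar;
  wstar : wcar -> wcar;
  wmulA : forall x y z, wmul x (wmul y z) = wmul (wmul x y) z;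
  wmul1l : forall x, wmul wone x = x;
  wmul1r : forall x, wmul x wone = x;
  wmulDl : forall x y z, wmul (x + y) z = wmul x z + wmul y z;
  wmulDr : forall x y z, wmul x (y + z) = wmul x y + wmul x z;
  wmulZl : forall (a : R[i]) x y, wmul (a *: x) y = a *: wmul x y;
  wmulZr : forall (a : R[i]) x y, wmul x (a *: y) = a *: wmul x y;
  wstarK : forall x, wstar (wstar x) = x;
  wstarD : forall x y, wstar (x + y) = wstar x + wstar y;
  wstarZ : forall (a : R[i]) x, wstar (a *: x) = (a^*)%C *: wstar x;
  wstarM : forall x y, wstar (wmul x y) = wmul (wstar y) (wstar x);
  wnormM : forall x y, `|wmul x y| <= `|x| * `|y|;
  wnormC : forall x, `|wmul (wstar x) x| = `|x| ^+ 2;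
  wpredual : exists (X : normedModType R[i]) (phi : wcar -> X -> R[i]^o),
    [/\ (forall v (a : R[i]) (x y : X), phi v (a *: x + y) = a * phi v x + phi v y)
        /\ (forall v, continuous (phi v)),
        (forall (a : R[i]) v w (x : X), phi (a *: v + w) x = a * phi v x + phi w x),
        (forall f : X -> R[i]^o,
           (forall (a : R[i]) (x y : X), f (a *: x + y) = a * f x + f y) ->
           continuous f -> exists v, phi v = f),
        (forall v (x : X), `|phi v x| <= `|v| * `|x|) &
        (forall v (e : R[i]), 0 < e ->
           exists x : X, `|x| <= 1 /\ `|v| - e < `|phi v x|)]
}.

Section Notions.
Variables (R : realType) (M : WstarAlgebra R).
Local Notation mul := (@wmul R M).
Local Notation star := (@wstar R M).

Definition is_proj (p : M) : Prop := star p = p /\ mul p p = p.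

Definition is_partial_isometry (u : M) : Prop := is_proj (mul (star u) u).

Definition proj_semilattice (E : set M) : Prop :=
  [/\ (forall p, E p -> is_proj p),
      (forall p q, E p -> E q -> mul p q = mul q p) &
      (forall p q, E p -> E q -> E (mul p q))].

Definition UE (E : set M) : set M :=
  [set u | is_partial_isometry u /\ E (mul (star u) u) /\ E (mul u (star u))].

Definition corner (p : M) : set M := [set mul (mul p x) p | x in setT].
Definition corner_center (p : M) : set M :=
  [set z | corner p z /\ forall y, corner p y -> mul z y = mul y z].

Definition Sset (E : set M) : set M :=
  [set u | exists2 p, E p & corner_center p u /\ is_partial_isometry u].

End Notions.

Definition is_subsemigroup (T : Type) (op : T -> T -> T) (S : set T) : Prop :=
  (forall s t, S s -> S t -> S (op s t)) /\
  (forall s t u, S s -> S t -> S u -> op s (op t u) = op (op s t) u).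

Definition is_inverse_semigroup (T : Type) (op : T -> T -> T) (S : set T) : Prop :=
  is_subsemigroup op S /\
  (forall s, S s -> exists! t, S t /\ op (op s t) s = s /\ op (op t s) t = t).

Definition is_clifford_inverse_semigroup (T : Type) (op : T -> T -> T) (S : set T)
  : Prop :=
  is_inverse_semigroup op S /\
  (forall e s, S e -> op e e = e -> S s -> op e s = op s e).

From HB Require Import structures.
From mathcomp Require Import all_boot all_order all_algebra.
From mathcomp Require Import complex.
From mathcomp Require Import all_classical all_reals all_analysis.
Import GRing.Theory Num.Theory.
Local Open Scope classical_set_scope.

(* Every u in S lies in the center of a corner pMp, so it is normal and commutes
   with every projection of E (these commute with p).  Hence S is closed under
   products and adjoints, u u^* u = u makes u^* an inverse of u, and an
   idempotent e of S equals e^* e, a projection of E by hypothesis, so it is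
   central in S.  A regular semigroup whose idempotents are central is a
   Clifford inverse semigroup. *)

Set Implicit Arguments. Unset Strict Implicit.

Section RegularSemigroup.
Variables (T : Type) (op : T -> T -> T) (S : set T).
Hypothesis opA : associative op.
Hypothesis S_closed : forall s t, S s -> S t -> S (op s t).
Hypothesis idempotent_central :
  forall e s, S e -> op e e = e -> S s -> op e s = op s e.

Lemma regular_inverse_unique (s t w : T) : S s -> S t -> S w ->
  op (op s t) s = s -> op (op t s) t = t ->
  op (op s w) s = s -> op (op w s) w = w -> t = w.
Proof.
move=> Ss St Sw sts tst sws wsw.
have ts_idem : op (op t s) (op t s) = op t s by rewrite opA tst.
have st_idem : op (op s t) (op s t) = op s t by rewrite opA sts.
have t_wst : t = op (op w s) t.
  rewrite {1}(_ : t = op (op (op t s) (op w s)) t); last by rewrite -{1}tst -{1}sws !opA.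
  rewrite (idempotent_central (S_closed St Ss) ts_idem (S_closed Sw Ss)).
  by rewrite -(opA (op w s)) tst.
have w_wst : w = op (op w s) t.
  rewrite {1}(_ : w = op w (op (op s t) (op s w))); last first.
    by rewrite !opA -(opA w s t) -(opA w _ s) sts wsw.
  rewrite (idempotent_central (S_closed Ss St) st_idem (S_closed Ss Sw)).
  by rewrite !opA wsw.
by rewrite t_wst -w_wst.
Qed.

Lemma clifford_of_regular (inv : T -> T) :
  (forall s, S s -> S (inv s)) ->
  (forall s, S s -> op (op s (inv s)) s = s) ->
  (forall s, S s -> op (op (inv s) s) (inv s) = inv s) ->
  is_clifford_inverse_semigroup op S.
Proof.
move=> S_inv sts tst.
have semigroup : is_subsemigroup op S by split=> // s t u _ _ _; apply: opA.
split=> //; split=> // s Ss.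
exists (inv s); split; first by split; [exact: S_inv | split; [exact: sts | exact: tst]].
move=> w [Sw [sws wsw]].
exact: (regular_inverse_unique Ss (S_inv _ Ss) Sw (sts _ Ss) (tst _ Ss) sws wsw).
Qed.

End RegularSemigroup.

Section WstarAlgebraFacts.
Local Open Scope ring_scope.
Variables (R : realType) (M : WstarAlgebra R).
Local Notation mul := (@wmul R M).
Local Notation star := (@wstar R M).

Lemma wstar0 : star 0 = 0.
Proof. by have := wstarD (0 : M) 0; rewrite addr0 -[X in X = _]addr0 => /addrI. Qed.

Lemma wstarN (x : M) : star (- x) = - star x.
Proof. by apply/eqP; rewrite -subr_eq0 opprK -wstarD addNr wstar0. Qed.

Lemma wmul0l (x : M) : mul 0 x = 0.
Proof. by have := wmulDl 0 0 x; rewrite addr0 -[X in X = _]addr0 => /addrI. Qed.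

Lemma wmul0r (x : M) : mul x 0 = 0.
Proof. by have := wmulDr x 0 0; rewrite addr0 -[X in X = _]addr0 => /addrI. Qed.

Lemma wmulNl (x y : M) : mul (- x) y = - mul x y.
Proof. by apply/eqP; rewrite -subr_eq0 opprK -wmulDl addNr wmul0l. Qed.

Lemma wmulNr (x y : M) : mul x (- y) = - mul x y.
Proof. by apply/eqP; rewrite -subr_eq0 opprK -wmulDr addNr wmul0r. Qed.

Lemma wstar_mul_eq0 (x : M) : mul (star x) x = 0 -> x = 0.
Proof.
move=> xx0; have := wnormC x; rewrite xx0 normr0 => /esym/eqP.
by rewrite sqrf_eq0 => /eqP/normr0_eq0.
Qed.

(* [w^* w = 0] for [w = u u^* u - u], expanding with [e := u^* u] and [e^2 = e]. *)
Lemma pisometry_mulK (u : M) : is_partial_isometry u -> mul u (mul (star u) u) = u.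
Proof.
move=> [e_sa e_idem]; set e := mul (star u) u in e_sa e_idem *.
apply/eqP; rewrite -subr_eq0; apply/eqP/wstar_mul_eq0.
rewrite wstarD wstarN wstarM e_sa !wmulDl !wmulDr !wmulNl !wmulNr !wmulA -/e.
rewrite -!(wmulA e (star u) u) -/e !e_idem -!(wmulA e (star u) u) -/e !e_idem.
by rewrite !subrr addr0.
Qed.

Lemma pisometry_star (u : M) :
  is_partial_isometry u -> mul (star u) u = mul u (star u) ->
  is_partial_isometry (star u).
Proof. by move=> u_pi normal; rewrite /is_partial_isometry wstarK -normal. Qed.

Lemma proj_mul (p q : M) :
  is_proj p -> is_proj q -> mul p q = mul q p -> is_proj (mul p q).
Proof.
move=> [p_sa p_idem] [q_sa q_idem] pq; split; first by rewrite wstarM p_sa q_sa.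
by rewrite -wmulA (wmulA q p q) -pq -wmulA q_idem wmulA p_idem.
Qed.

Lemma pisometry_mul (u v : M) :
  is_partial_isometry u -> is_partial_isometry v ->
  mul v (mul (star u) u) = mul (mul (star u) u) v ->
  is_partial_isometry (mul u v).
Proof.
move=> u_pi v_pi vu; have [e_sa _] := u_pi.
set e := mul (star u) u in e_sa vu.
have vsu : mul e (star v) = mul (star v) e.
  by have := congr1 star vu; rewrite [star (mul v e)]wstarM [star (mul e v)]wstarM e_sa.
rewrite /is_partial_isometry wstarM -wmulA (wmulA (star u) u v) -[mul (star u) u]/e.
rewrite -vu wmulA; apply: proj_mul => //.
by rewrite -wmulA vu wmulA -vsu -wmulA.
Qed.

Lemma cornerP (p y : M) : is_proj p -> corner p y <-> mul (mul p y) p = y.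
Proof.
move=> [_ p_idem]; split; last by exists y.
by case=> x _ <-; rewrite !wmulA p_idem -wmulA p_idem.
Qed.

Lemma corner_mull (p y : M) : is_proj p -> corner p y -> mul p y = y.
Proof. by move=> [_ p_idem] [x _ <-]; rewrite !wmulA p_idem. Qed.

Lemma corner_mulr (p y : M) : is_proj p -> corner p y -> mul y p = y.
Proof. by move=> [_ p_idem] [x _ <-]; rewrite -wmulA p_idem. Qed.

Lemma corner_star (p y : M) : is_proj p -> corner p y -> corner p (star y).
Proof. by move=> [p_sa _] [x _ <-]; exists (star x) => //; rewrite !wstarM p_sa wmulA. Qed.

Lemma corner_mul_sub (p q y : M) : mul p q = mul q p -> corner (mul p q) y -> corner p y.
Proof.
move=> pq [x _ <-].
by exists (mul (mul q x) q) => //; rewrite {2}pq !wmulA.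
Qed.

Lemma corner_center_star (p u : M) :
  is_proj p -> corner_center p u -> corner_center p (star u).
Proof.
move=> p_proj [u_corner u_central]; split; first exact: corner_star.
move=> y y_corner; have := u_central _ (corner_star p_proj y_corner).
by move/(congr1 star); rewrite !wstarM !wstarK => ->.
Qed.

Lemma corner_center_normal (p u : M) :
  is_proj p -> corner_center p u -> mul (star u) u = mul u (star u).
Proof. by move=> p_proj [u_corner u_central]; rewrite u_central //; exact: corner_star. Qed.

(* [u] commutes with [p e], which lies in [pMp]. *)
Lemma corner_center_commute (p e u : M) :
  is_proj p -> mul p e = mul e p -> corner_center p u -> mul u e = mul e u.
Proof.
move=> p_proj pe [u_corner u_central]; have [_ p_idem] := p_proj.
have pe_corner : corner p (mul p e).
  by apply/cornerP => //; rewrite -!wmulA -pe !wmulA !p_idem.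
have := u_central _ pe_corner.
by rewrite wmulA (corner_mulr p_proj u_corner) pe -wmulA (corner_mull p_proj u_corner).
Qed.

Lemma corner_center_mul (p q u v : M) :
  is_proj p -> is_proj q -> mul p q = mul q p ->
  corner_center p u -> corner_center q v -> corner_center (mul p q) (mul u v).
Proof.
move=> p_proj q_proj pq u_cc v_cc.
have [u_corner u_central] := u_cc; have [v_corner v_central] := v_cc.
have uq := corner_center_commute p_proj pq u_cc.
have vp := corner_center_commute q_proj (esym pq) v_cc.
split.
- apply/(cornerP _ (proj_mul p_proj q_proj pq)).
  rewrite -(wmulA p q) (wmulA q u v) -uq -(wmulA u q v) (corner_mull q_proj v_corner).
  rewrite (wmulA p u v) (corner_mull p_proj u_corner) -(wmulA u v) (wmulA v p q) vp.
  by rewrite -(wmulA p v q) (corner_mulr q_proj v_corner) wmulA (corner_mulr p_proj u_corner).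
- move=> y y_corner.
  have y_p := corner_mul_sub pq y_corner.
  have y_q : corner q y by rewrite pq in y_corner; exact: corner_mul_sub y_corner.
  by rewrite -wmulA (v_central _ y_q) wmulA (u_central _ y_p) wmulA.
Qed.

End WstarAlgebraFacts.

Section CenterUnion.
Variables (R : realType) (M : WstarAlgebra R) (E : set M).
Local Notation mul := (@wmul R M).
Local Notation star := (@wstar R M).
Hypothesis E_semilattice : proj_semilattice E.
Hypothesis S_sub_UE : Sset E `<=` UE E.

Let E_proj := let: And3 h _ _ := E_semilattice in h.
Let E_comm := let: And3 _ h _ := E_semilattice in h.
Let E_mul := let: And3 _ _ h := E_semilattice in h.

Lemma Sset_mul (u v : M) : Sset E u -> Sset E v -> Sset E (mul u v).
Proof.
move=> Su Sv; have [_ [Eu _]] := S_sub_UE Su.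
case: Su => p Ep [u_cc u_pi]; case: Sv => q Eq [v_cc v_pi].
exists (mul p q); first exact: E_mul.
split; first exact: corner_center_mul (E_proj Ep) (E_proj Eq) (E_comm Ep Eq) u_cc v_cc.
apply: pisometry_mul => //.
exact: corner_center_commute (E_proj Eq) (E_comm Eq Eu) v_cc.
Qed.

Lemma Sset_star (u : M) : Sset E u -> Sset E (star u).
Proof.
case=> p Ep [u_cc u_pi]; exists p => //; split.
  exact: corner_center_star (E_proj Ep) u_cc.
exact: pisometry_star u_pi (corner_center_normal (E_proj Ep) u_cc).
Qed.

Lemma Sset_mulK (u : M) : Sset E u -> mul (mul u (star u)) u = u.
Proof. by move=> Su; have [u_pi _] := S_sub_UE Su; rewrite -wmulA pisometry_mulK. Qed.

Lemma Sset_star_mulK (u : M) : Sset E u -> mul (mul (star u) u) (star u) = star u.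
Proof.
by move/Sset_mulK/(congr1 star); rewrite !wstarM wstarK wmulA.
Qed.

(* By normality, [e^* e = e e^* = (e e) e^* = e (e^* e) = e]. *)
Lemma Sset_idempotent_in_E (e : M) : Sset E e -> mul e e = e -> E e.
Proof.
move=> Se e_idem; have [e_pi [Ee _]] := S_sub_UE Se.
case: Se => p Ep [e_cc _]; have normal := corner_center_normal (E_proj Ep) e_cc.
suff -> : e = mul (star e) e by [].
by rewrite normal -{1}(pisometry_mulK e_pi) normal wmulA e_idem.
Qed.

Lemma Sset_idempotent_central (e s : M) :
  Sset E e -> mul e e = e -> Sset E s -> mul e s = mul s e.
Proof.
move=> Se e_idem [p Ep [s_cc _]]; have Ee := Sset_idempotent_in_E Se e_idem.
by rewrite (corner_center_commute (E_proj Ep) (E_comm Ep Ee) s_cc).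
Qed.

End CenterUnion.

Theorem proposition3p5 (R : realType) (M : WstarAlgebra R) (E : set M) :
  proj_semilattice E ->
  Sset E `<=` UE E ->
  is_inverse_semigroup (@wmul R M) (Sset E) /\
  is_clifford_inverse_semigroup (@wmul R M) (Sset E).
Proof.
move=> E_semilattice S_sub_UE.
suff clifford : is_clifford_inverse_semigroup (@wmul R M) (Sset E).
  by split; first case: clifford.
apply: (clifford_of_regular (@wmulA R M) (Sset_mul E_semilattice S_sub_UE)
          (Sset_idempotent_central E_semilattice S_sub_UE) (inv := @wstar R M)).
- exact: Sset_star.
- exact: Sset_mulK.
- exact: Sset_star_mulK.
Qed.
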